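(* Let $\mathcal{S}\in\mathrm{Rep}$. Then there is a unique standard extended multi-segment $\mathcal{S}'\in[\mathcal{S}]$.
   Context: Formal extended segment: $([A,B]_\rho,\mu)$ with $\rho$ irreducible self-dual supercuspidal of some $\mathrm{GL}_d(F)$ ($F$ $p$-adic), $A-B\in\mathbb{Z}_{\ge0}$, $\mu\in\mathbb{Z}$, $\mu\equiv b\pmod2$ with $b=A-B+1$, $a=A+B+1$; extended segment if moreover $|\mu|\le b$. A formal extended multi-segment $\mathcal{S}$: a finite set $C_{\mathcal{S}}$ of such $\rho$ and sequences $(([A_i^\rho,B_i^\rho]_\rho,\mu_i^\rho))_{i=1}^{n_\rho}$ of formal extended segments with: $A_i^\rho>A_j^\rho$ and $B_i^\rho>B_j^\rho$ imply $i>j$; $A_i^\rho+B_i^\rho\ge0$; $\bigoplus_{\rho,i}\rho\boxtimes S_{a_i^\rho}\boxtimes S_{b_i^\rho}$ is an Arthur parameter of good parity for some $G_n$ ($G_n$ split $\mathrm{SO}_{2n+1}(F)$ or $\mathrm{Sp}_{2n}(F)$); $\sum_\rho\sum_i(\lfloor\mu_i^\rho/2\rfloor+\mu_i^\rho\sum_{j<i}(b_j^\rho-1))\equiv0\pmod2$. Extended multi-segment: all entries are extended segments. Admissible: for each $\rho$ with some $B_i^\rho<0$, $B_i^\rho>B_j^\rho\Rightarrow i>j$. Condition (N): $|A_i^\rho-A_{i-1}^\rho|+|B_i^\rho-B_{i-1}^\rho|\ge|\mu_i^\rho-\mu_{i-1}^\rho|$ for all $\rho$, $1<i\le n_\rho$.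 Reorder $R_i^\rho$ (changing only positions $i,i+1$ of the $\rho$-sequence): if $[A_i,B_i]\subseteq[A_{i+1},B_{i+1}]$, replace by $([A_{i+1},B_{i+1}]_\rho,2\mu_i-\mu_{i+1}),([A_i,B_i]_\rho,\mu_i)$; if $[A_i,B_i]\supseteq[A_{i+1},B_{i+1}]$, replace by $([A_{i+1},B_{i+1}]_\rho,\mu_{i+1}),([A_i,B_i]_\rho,2\mu_{i+1}-\mu_i)$; if $A_{i+1}\ge A_i$, $B_{i+1}\ge B_i$, do nothing. $[\mathcal{S}]$ is the equivalence class generated by these operations. $\mathrm{Rep}$: admissible extended multi-segments $\mathcal{S}$ such that every element of $[\mathcal{S}]$ satisfies (N), and $|\hat\mu_i^\rho|\le a_i^\rho$ for all $i,\rho$, where $\hat\mu_i^\rho=\mu_i^\rho$ if $B_i^\rho\in\mathbb{Z}$ and $\mu_i^\rho-1$ otherwise. $\mathcal{S}$ is standard if for all $\rho$, $i,j$: ($B_i^\rho<B_j^\rho$, or $B_i^\rho=B_j^\rho$ and $A_i^\rho>A_j^\rho$) implies $i<j$. *)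

From HB Require Import structures.
From mathcomp Require Import all_boot all_order all_algebra.
From mathcomp Require Import finmap.
From Stdlib Require Import Relations.
Set Implicit Arguments. Unset Strict Implicit. Unset Printing Implicit Defensive.
Import Order.TTheory GRing.Theory Num.Theory.
Local Open Scope ring_scope.
Local Open Scope fset_scope.
Local Open Scope ring_scope.


(* A (formal extended) segment ([A,B]_rho, mu); A, B are half-integers,
   stored as rationals. The cuspidal rho is the key of the multi-segment. *)
Record seg := Seg { sA : rat; sB : rat; smu : int }.
Definition seg0 := Seg 0 0 0.
Definition seg2t (s : seg) : rat * rat * int := (sA s, sB s, smu s).
Definition t2seg (t : rat * rat * int) : seg := Seg t.1.1 t.1.2 t.2.
Lemma seg2tK : cancel seg2t t2seg. Proof. by case. Qed.
HB.instance Definition _ := Equality.copy seg (can_type seg2tK).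

(* b = A - B + 1 and a = A + B + 1 (natural numbers on valid data) *)
Definition bnat (s : seg) : nat := Num.truncn (sA s - sB s + 1).
Definition anat (s : seg) : nat := Num.truncn (sA s + sB s + 1).

Definition formal_seg (s : seg) : Prop :=
  (sA s - sB s \is a Num.nat) /\ (2 %| smu s - (bnat s)%:Z)%Z.

Definition ext_seg (s : seg) : Prop :=
  formal_seg s /\ (absz (smu s) <= bnat s)%N.

Section MS.
Variable Cusp : choiceType.

(* A (formal extended) multi-segment: finite set C_S = domf S of cuspidals,
   with, for each rho, the sequence of its segments. *)
Definition mseg := {fmap Cusp -> seq seg}.

Definition segs (S : mseg) (r : Cusp) : seq seg := odflt [::] (S.[? r])%fmap.

Definition sg (S : mseg) (r : Cusp) (i : nat) : seg := nth seg0 (segs S r) i.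

Variables (deg : Cusp -> nat)          (* rho is a rep of GL_{deg rho}(F) *)
          (symp : Cusp -> bool)        (* rho self-dual of symplectic type *)
          (Chi : zmodType)             (* characters of F^x, written additively *)
          (detc : Cusp -> Chi).        (* central character = det of the L-parameter of rho *)

(* rho (x) S_a (x) S_b is of symplectic type *)
Definition summand_symp (r : Cusp) (s : seg) : bool :=
  symp r (+) ~~ odd (anat s) (+) ~~ odd (bnat s).

Inductive group_kind := SOodd | Spev .

(* \oplus rho (x) S_a (x) S_b is a local Arthur parameter of good parity
   for G_n of the given kind *)
Definition good_parity_AP (S : mseg) (g : group_kind) (n : nat) : Prop :=
  (forall r, r \in domf S -> forall s, s \in segs S r ->
       (sA s + sB s \is a Num.int) /\ (0 <= sA s + sB s)%R) /\
  match g with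
  | SOodd =>
      (* dual group Sp_{2n}(C): all summands symplectic, dimension 2n *)
      (forall r, r \in domf S -> forall s, s \in segs S r -> summand_symp r s) /\
      (\sum_(r <- enum_fset (domf S)) \sum_(s <- segs S r)
           deg r * anat s * bnat s)%N = (2 * n)%N
  | Spev =>
      (* dual group SO_{2n+1}(C): all summands orthogonal, dimension
         2n+1, trivial determinant *)
      (forall r, r \in domf S -> forall s, s \in segs S r -> ~~ summand_symp r s) /\
      (\sum_(r <- enum_fset (domf S)) \sum_(s <- segs S r)
           deg r * anat s * bnat s)%N = (2 * n).+1 /\
      \sum_(r <- enum_fset (domf S)) \sum_(s <- segs S r)
           detc r *+ (anat s * bnat s) = 0
  end.

Definition parity_sum (S : mseg) : int :=
  \sum_(r <- enum_fset (domf S))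
    \sum_(i < size (segs S r))
      ((smu (sg S r i) %/ 2)%Z +
       smu (sg S r i) * (\sum_(j < i) ((bnat (sg S r j))%:Z - 1))).

Definition formal_ext_ms (S : mseg) : Prop :=
  (forall r, r \in domf S -> forall s, s \in segs S r -> formal_seg s) /\
  (forall r i j, (i < size (segs S r))%N -> (j < size (segs S r))%N ->
      sA (sg S r j) < sA (sg S r i) -> sB (sg S r j) < sB (sg S r i) ->
      (j < i)%N) /\
  (forall r, r \in domf S -> forall s, s \in segs S r -> 0 <= sA s + sB s) /\
  (exists g n, good_parity_AP S g n) /\
  (2 %| parity_sum S)%Z.

Definition ext_ms (S : mseg) : Prop :=
  formal_ext_ms S /\ (forall r, r \in domf S -> forall s, s \in segs S r -> ext_seg s).

Definition admissible (S : mseg) : Prop :=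
  forall r, (exists2 i, (i < size (segs S r))%N & sB (sg S r i) < 0) ->
  forall i j, (i < size (segs S r))%N -> (j < size (segs S r))%N ->
     sB (sg S r j) < sB (sg S r i) -> (j < i)%N.

Definition condN (S : mseg) : Prop :=
  forall r i, (0 < i)%N -> (i < size (segs S r))%N ->
    `|((smu (sg S r i) - smu (sg S r i.-1))%:~R : rat)|
      <= `|sA (sg S r i) - sA (sg S r i.-1)| + `|sB (sg S r i) - sB (sg S r i.-1)|.

(* the operation R_i on two consecutive segments x = position i,
   y = position i+1, producing x', y' *)
Definition rstep (x y x' y' : seg) : Prop :=
  (
   (sA x <= sA y /\ sB y <= sB x) /\
   x' = Seg (sA y) (sB y) (2 * smu x - smu y) /\ y' = Seg (sA x) (sB x) (smu x))
  \/
  (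
   (sA y <= sA x /\ sB x <= sB y) /\
   x' = Seg (sA y) (sB y) (smu y) /\ y' = Seg (sA x) (sB x) (2 * smu y - smu x)).

Definition Rstep (S T : mseg) : Prop :=
  exists r s1 x y s2 x' y', r \in domf S /\
    segs S r = s1 ++ x :: y :: s2 /\ rstep x y x' y' /\
    T = (S.[r <- s1 ++ x' :: y' :: s2])%fmap.

(* [S]: the equivalence class generated by the operations R_i^rho
   (the "do nothing" case is covered by reflexivity) *)
Definition equiv_ms (S T : mseg) : Prop := clos_refl_sym_trans mseg Rstep S T.

Definition hatmu (s : seg) : int :=
  if sB s \is a Num.int then smu s else smu s - 1.

Definition in_Rep (S : mseg) : Prop :=
  ext_ms S /\ admissible S /\
  (forall T, equiv_ms S T -> condN T) /\
  (forall r i, (i < size (segs S r))%N -> (absz (hatmu (sg S r i)) <= anat (sg S r i))%N).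

Definition standard (S : mseg) : Prop :=
  forall r i j, (i < size (segs S r))%N -> (j < size (segs S r))%N ->
    (sB (sg S r i) < sB (sg S r j) \/
     (sB (sg S r i) = sB (sg S r j) /\ sA (sg S r j) < sA (sg S r i))) ->
    (i < j)%N.

End MS.

From HB Require Import structures.
From mathcomp Require Import all_boot all_order all_algebra.
From mathcomp Require Import finmap.
From mathcomp Require Import zify ring lra.
From Stdlib Require Import Relation_Operators Relations_3_facts.
Set Implicit Arguments. Unset Strict Implicit. Unset Printing Implicit Defensive.
Import Order.TTheory GRing.Theory Num.Theory.
Local Open Scope ring_scope.

(* Restricted to a strict inclusion [A_i,B_i] ⊊ [A_{i+1},B_{i+1}] and read from
   left to right, the operation R_i is a rewriting step on the ρ-sequence of a
   multi-segment: the larger interval moves to the left and its μ is reflected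
   through μ_i.  It terminates (the number of nested pairs drops by one) and it
   is locally confluent (the only critical pair closes by a braid relation of
   reflections), so by Newman's lemma normal forms are unique in each
   conversion class.  Condition (N) on [S] makes every R_i between segments
   with equal intervals the identity, so [S] is exactly conversion ρ by ρ; it
   also guarantees |μ| <= b along forward steps, so normalising S stays among
   extended multi-segments.  A normal form satisfying the ordering condition of
   multi-segments is precisely a standard one. *)

(** * Abstract rewriting *)

Section Rewriting.
Variables (T : Type) (R : Relation T).

Definition normal (x : T) := forall y, ~ R x y.

Lemma noetherian_measure (m : T -> nat) :
  (forall x y, R x y -> (m y < m x)%N) -> Noetherian T R.
Proof.
move=> dec x; have [n] := ubnP (m x); elim: n x => [|n IH] x; first by rewrite ltn0.
move=> lt_xn; constructor=> y /dec lt_yx; apply: IH; exact: leq_trans lt_yx lt_xn.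
Qed.

Lemma normal_Rstar x y : normal x -> Rstar T R x y -> y = x.
Proof. by move=> nx [|u v /nx]. Qed.

Lemma rst_coherent : Confluent T R ->
  forall x y, clos_refl_sym_trans T R x y -> coherent T R x y.
Proof.
move=> conf x y; elim=> {x y} [x y xy | x | x y _ IH | x y z _ IHxy _ IHyz].
- exact/Rstar_imp_coherent/Rstar_contains_R.
- exact/Rstar_imp_coherent/Rstar_0.
- exact: coherent_symmetric.
- case: IHxy => u [xu yu]; case: IHyz => v [yv zv].
  have [w [uw vw]] := conf y u v yu yv.
  by exists w; split; [exact: Rstar_transitive xu uw | exact: Rstar_transitive zv vw].
Qed.

Lemma rst_normal_eq x y : Confluent T R -> clos_refl_sym_trans T R x y ->
  normal x -> normal y -> x = y.
Proof.
move=> conf /(rst_coherent conf)[z [xz yz]] nx ny.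
by rewrite -(normal_Rstar nx xz) -(normal_Rstar ny yz).
Qed.

End Rewriting.

(** * Swapping nested segments *)

Definition nested (x y : seg) : bool :=
  [&& sA x <= sA y, sB y <= sB x & (sA x != sA y) || (sB x != sB y)].

Definition mirror (x y : seg) : seg := Seg (sA y) (sB y) (2 * smu x - smu y).

(* The operation R_i of the paper on a strictly nested pair, oriented so that
   the larger interval moves to the left. *)
Inductive swap_step : seq seg -> seq seg -> Prop :=
| swap_here x y s : nested x y -> swap_step [:: x, y & s] [:: mirror x y, x & s]
| swap_cons z s s' : swap_step s s' -> swap_step (z :: s) (z :: s').

Local Notation conv := (clos_refl_sym_trans (seq seg) swap_step).

Lemma nested_trans x y z : nested x y -> nested y z -> nested x z.
Proof.
move=> /and3P[xy1 xy2 xy3] /and3P[yz1 yz2 yz3].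
apply/and3P; split; [exact: le_trans xy1 yz1 | exact: le_trans yz2 xy2 |].
rewrite -!negb_and in xy3 *; apply: contra xy3 => /andP[/eqP eA /eqP eB].
by rewrite -eA in yz1; rewrite -eB in yz2; rewrite !eq_le xy1 yz1 xy2 yz2.
Qed.

Lemma nested_asym x y : nested x y -> ~~ nested y x.
Proof.
move=> /and3P[xy1 xy2]; apply: contraTN => /and3P[yx1 yx2 _].
by rewrite negb_or !negbK !eq_le xy1 yx1 xy2 yx2.
Qed.

Lemma mirrorK x : involutive (mirror x).
Proof. by case=> A B m; rewrite /mirror /=; congr Seg; ring. Qed.

Lemma mirrorxx x : mirror x x = x.
Proof. by case: x => A B m; rewrite /mirror /=; congr Seg; ring. Qed.

Lemma mirror_braid x y z : mirror x (mirror y z) = mirror (mirror x y) (mirror x z).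
Proof. by rewrite /mirror /=; congr Seg; ring. Qed.

Lemma Rstar_swap_cons z l l' :
  Rstar _ swap_step l l' -> Rstar _ swap_step (z :: l) (z :: l').
Proof.
elim=> [u|u v w uv _ IH]; first exact: Rstar_0.
exact: Rstar_n (swap_cons z uv) IH.
Qed.

Lemma swap_here_lconf x y s l :
  nested x y -> swap_step [:: x, y & s] l -> coherent _ swap_step [:: mirror x y, x & s] l.
Proof.
move=> nxy; move E: [:: x, y & s] => l0 st.
case: st E => [x' y' s' _ [<- <- <-] | z t t' st [<- Et]].
  exact/Rstar_imp_coherent/Rstar_0.
case: st Et => [y' w s0 + [ey ->] | u t0 t0' st0 [<- ->]]; last first.
  exists [:: mirror x y, x & t0']; split.
  - exact/Rstar_swap_cons/Rstar_swap_cons/Rstar_contains_R.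
  - exact/Rstar_contains_R/swap_here.
(* overlapping swaps: they meet again by the braid relation of [mirror] *)
rewrite -{}ey => nyw; have nxw := nested_trans nxy nyw.
exists [:: mirror x (mirror y w), mirror x y, x & s0]; split.
- apply: Rstar_n (swap_cons _ (swap_here _ nxw)) _.
  rewrite mirror_braid; exact/Rstar_contains_R/swap_here.
- apply: Rstar_n (swap_here _ _) _; first exact: nxw.
  exact/Rstar_contains_R/swap_cons/swap_here.
Qed.

Lemma swap_step_lconf : Locally_confluent _ swap_step.
Proof.
move=> l l1 l2 st1; elim: st1 l2 => [x y s nxy | z s s' st IH] l2 st2.
  exact: swap_here_lconf.
move E: (z :: s) st2 => l0 st2; case: st2 E => [x y t nxy [-> Et] | u t t' st' [<- es]].
  apply: coherent_symmetric; apply: swap_here_lconf => //.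
  by rewrite -Et; apply: swap_cons.
rewrite -es in st'; have [w [s'w t'w]] := IH _ st'.
by exists (z :: w); split; apply: Rstar_swap_cons.
Qed.

Lemma swap_step_catl s l l' : swap_step l l' -> swap_step (s ++ l) (s ++ l').
Proof. by elim: s => //= z s IH /IH; apply: swap_cons. Qed.

Lemma swap_stepP l l' : swap_step l l' -> exists s1 x y s2,
  [/\ l = s1 ++ [:: x, y & s2], l' = s1 ++ [:: mirror x y, x & s2] & nested x y].
Proof.
elim=> [x y s nxy | z s s' _ [s1 [x [y [s2 [-> -> nxy]]]]]].
  by exists [::], x, y, s.
by exists (z :: s1), x, y, s2.
Qed.

(* Kept as a [seg] (rather than a pair) so that [anat], [bnat], [nested] and
   [may_precede] are invariant under it by mere computation. *)
Definition forget_mu (s : seg) : seg := Seg (sA s) (sB s) 0.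

Lemma swap_step_perm l l' : swap_step l l' -> perm_eq (map forget_mu l) (map forget_mu l').
Proof.
elim=> [x y s _ | z s s' _ IH] /=; last by rewrite perm_cons.
by apply/permP => p /=; rewrite addnCA.
Qed.

Fixpoint nest_count (l : seq seg) : nat :=
  if l is x :: s then (count (nested x) s + nest_count s)%N else 0%N.

Lemma swap_step_nest_count l l' : swap_step l l' -> nest_count l = (nest_count l').+1.
Proof.
elim=> [x y s nxy | z s s' st IH] /=.
  rewrite -[nested (mirror x y)]/(nested y) nxy (negbTE (nested_asym nxy)); lia.
rewrite IH addnS; congr (_ + _).+1.
by have /permP/(_ (nested z)) := swap_step_perm st; rewrite !count_map.
Qed.

Lemma swap_step_confluent : Confluent _ swap_step.
Proof.
apply: Newman swap_step_lconf; apply: (noetherian_measure (m := nest_count)).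
by move=> l l' /swap_step_nest_count ->.
Qed.

Definition nonnested (l : seq seg) : bool := sorted (fun x y => ~~ nested x y) l.

Lemma nonnested_normal l : nonnested l -> normal swap_step l.
Proof.
move=> nl l' st; elim: st nl => [x y s nxy | z s s' _ IH] /=; first by rewrite nxy.
by move/path_sorted/IH.
Qed.

Lemma swap_step_exists l : ~~ nonnested l -> exists l', swap_step l l'.
Proof.
elim: l => [|x [|y s] IH] //=; rewrite negb_and negbK.
case/orP => [nxy | /IH[l' st]]; first by eexists; apply: swap_here.
by exists (x :: l'); apply: swap_cons.
Qed.

(** * Condition (N) and invariants of swaps *)

Definition condN_pair (x y : seg) : bool :=
  `|((smu y - smu x)%:~R : rat)| <= `|sA y - sA x| + `|sB y - sB x|.

Lemma not_nested_same x y : sA x <= sA y -> sB y <= sB x -> ~~ nested x y ->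
  sA x = sA y /\ sB x = sB y.
Proof. by rewrite /nested => -> -> /=; rewrite negb_or !negbK => /andP[/eqP-> /eqP->]. Qed.

Lemma condN_pair_eq x y : sA x = sA y -> sB x = sB y -> condN_pair x y -> x = y.
Proof.
case: x y => [A B m] [_ _ m'] /= <- <-.
by rewrite /condN_pair /= !subrr normr_le0 intr_eq0 subr_eq0 => /eqP->.
Qed.

Lemma rstep_conv s1 x y s2 x' y' : condN_pair x y -> rstep x y x' y' ->
  conv (s1 ++ [:: x, y & s2]) (s1 ++ [:: x', y' & s2]).
Proof.
have seg_eta (z : seg) : Seg (sA z) (sB z) (smu z) = z by case: z.
move=> cxy [[[xyA yxB] [-> ->]] | [[yxA xyB] [-> ->]]]; rewrite seg_eta.
- rewrite -/(mirror x y); case nxy: (nested x y).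
    exact/rst_step/swap_step_catl/swap_here.
  have [eA eB] := not_nested_same xyA yxB (negbT nxy).
  by rewrite -(condN_pair_eq eA eB cxy) mirrorxx; apply: rst_refl.
- rewrite -/(mirror y x); case nyx: (nested y x).
    apply/rst_sym/rst_step/swap_step_catl.
    by rewrite -[in X in swap_step _ X](mirrorK y x); apply: swap_here.
  have [eA eB] := not_nested_same yxA xyB (negbT nyx).
  by rewrite -(condN_pair_eq (esym eA) (esym eB) cxy) mirrorxx; apply: rst_refl.
Qed.

Lemma bnatE s : sA s - sB s \is a Num.nat -> (bnat s)%:R = sA s - sB s + 1.
Proof. by move=> h; rewrite /bnat truncnK // rpredD. Qed.

Lemma mirror_ext_seg x y : nested x y -> condN_pair x y -> ext_seg x -> ext_seg y ->
  ext_seg (mirror x y).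
Proof.
move=> /and3P[xyA xyB _] cxy [[natx parx] mux] [[naty pary] muy].
(* |2 mu_x - mu_y| <= |mu_x| + |mu_y - mu_x| <= b_x + (b_y - b_x) *)
have dmu : (`|smu y - smu x| <= (bnat y)%:Z - (bnat x)%:Z)%R.
  rewrite -(ler_int rat) intr_norm !rmorphB /= -!pmulrn bnatE // bnatE //.
  move: cxy; rewrite /condN_pair rmorphB /= (ger0_norm (x := sA y - sA x)) ?subr_ge0 //.
  rewrite (ler0_norm (x := sB y - sB x)) ?subr_le0 //.
  lra.
split; first split => //=.
  change (2 %| (2 * smu x - smu y) - (bnat y)%:Z)%Z; lia.
change (absz (2 * smu x - smu y)%R <= bnat y)%N.
move: dmu; rewrite -abszE; lia.
Qed.

Lemma swap_step_ext_seg l l' : swap_step l l' -> sorted condN_pair l ->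
  {in l, forall s, ext_seg s} -> {in l', forall s, ext_seg s}.
Proof.
elim=> [x y s nxy | z s s' _ IH] /= cl el t; rewrite !inE.
  case/or3P => [/eqP-> | /eqP-> | t_in]; last by apply: el; rewrite !inE t_in !orbT.
    case/andP: cl => cxy _.
    by apply: mirror_ext_seg => //; apply: el; rewrite !inE eqxx ?orbT.
  by apply: el; rewrite inE eqxx.
case/orP => [/eqP-> | t_in]; first by apply: el; rewrite inE eqxx.
apply: IH t_in; first exact: path_sorted cl.
by move=> u u_in; apply: el; rewrite inE u_in orbT.
Qed.

Definition may_precede (x y : seg) : bool := ~~ ((sA y < sA x) && (sB y < sB x)).

Lemma pairwise_may_precedeP l : pairwise may_precede l <->
  (forall i j, (i < size l)%N -> (j < size l)%N ->
     sA (nth seg0 l j) < sA (nth seg0 l i) -> sB (nth seg0 l j) < sB (nth seg0 l i) ->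
     (j < i)%N).
Proof.
split=> [/(pairwiseP seg0) pw i j il jl ltA ltB | ord].
  case: (ltngtP i j) => // [lt_ij | eq_ij]; last by move: ltA; rewrite eq_ij ltxx.
  by have := pw i j il jl lt_ij; rewrite /may_precede ltA ltB.
apply/(pairwiseP seg0) => i j il jl lt_ij; apply/negP => /andP[ltA ltB].
by have := ord i j il jl ltA ltB; rewrite ltnNge (ltnW lt_ij).
Qed.

Lemma swap_step_pairwise l l' : swap_step l l' ->
  pairwise may_precede l -> pairwise may_precede l'.
Proof.
elim=> [x y s /and3P[_ yx _] | z s s' st IH] /=.
  case/and3P=> [/andP[_ pxs] pys ps]; rewrite pys pxs ps !andbT /=.
  by rewrite /may_precede negb_and orbC -leNgt yx.
case/andP=> [pzs ps]; rewrite IH // andbT.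
by have := perm_all (may_precede z) (swap_step_perm st); rewrite !all_map => <-.
Qed.

Fixpoint parity_from (c : int) (l : seq seg) : int :=
  if l is x :: s then
    (smu x %/ 2)%Z + smu x * c + parity_from (c + ((bnat x)%:Z - 1)) s
  else 0.

Lemma parity_fromE c l : parity_from c l =
  \sum_(i < size l)
      ((smu (nth seg0 l i) %/ 2)%Z +
       smu (nth seg0 l i) * (c + \sum_(j < i) ((bnat (nth seg0 l j))%:Z - 1))).
Proof.
elim: l c => [|x s IH] c /=; first by rewrite big_ord0.
rewrite big_ord_recl /= big_ord0 addr0 IH; congr (_ + _).
by apply: eq_bigr => i _; rewrite add0n -[bump 0 i]/(i.+1) big_ord_recl /= !addrA.
Qed.

Lemma swap_step_parity c l l' : swap_step l l' ->
  {in l, forall s, (2 %| smu s - (bnat s)%:Z)%Z} ->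
  (2 %| parity_from c l - parity_from c l')%Z.
Proof.
move=> st; elim: st c => [x y s _ | z s s' _ IH] c par /=; last first.
  rewrite opprD addrACA subrr add0r; apply: IH => t t_in.
  by apply: par; rewrite inE t_in orbT.
have /dvdzP[kx ex] : (2 %| smu x - (bnat x)%:Z)%Z by apply: par; rewrite inE eqxx.
have /dvdzP[ky ey] : (2 %| smu y - (bnat y)%:Z)%Z by apply: par; rewrite !inE eqxx orbT.
(* The two changed summands differ by 2 (mu_y - mu_x) c + mu_y b_x - mu_x b_y,
   which is even since mu = b modulo 2. *)
have div2_mirror : ((smu y %/ 2)%Z = ((2 * smu x - smu y) %/ 2)%Z + (smu y - smu x))%R.
  by lia.
rewrite -[bnat (mirror x y)]/(bnat y) div2_mirror [c + _ + ((bnat x)%:Z - 1)]addrAC.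
set v := ((2 * smu x - smu y) %/ 2)%Z.
apply/dvdzP; exists ((smu y - smu x) * c + ky * bnat x - kx * bnat y).
have -> : smu x = (bnat x)%:Z + kx * 2 by rewrite -ex; ring.
have -> : smu y = (bnat y)%:Z + ky * 2 by rewrite -ey; ring.
ring.
Qed.

(** * Multi-segments *)

Section MultiSegments.
Variable Cusp : choiceType.
Implicit Types (S T U V : mseg Cusp) (r k : Cusp).

Lemma segs_set T r l k : segs T.[r <- l]%fmap k = if k == r then l else segs T k.
Proof. by rewrite /segs fnd_set; case: eqP. Qed.

Lemma domf_set T r l : r \in domf T -> domf T.[r <- l]%fmap = domf T.
Proof. by move=> r_in; rewrite dom_setf mem_fset1U. Qed.

Lemma segs_notin T k : k \notin domf T -> segs T k = [::].
Proof. by move=> k_out; rewrite /segs not_fnd. Qed.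

Lemma mseg_ext T U : domf T = domf U -> segs T =1 segs U -> T = U.
Proof.
have fndE (W : mseg Cusp) k : W.[? k]%fmap = if k \in domf W then Some (segs W k) else None.
  by rewrite /segs; case: fndP.
move=> dTU sTU; apply/fmapP => k; rewrite !fndE sTU.
by have -> : (k \in domf T) = (k \in domf U) by rewrite dTU.
Qed.

Lemma condN_sorted T r : condN T -> sorted condN_pair (segs T r).
Proof. by move=> hN; apply/(sortedP seg0) => i lt_i1; apply: (hN r i.+1). Qed.

Lemma Rstep_conv T U : condN T -> Rstep T U ->
  domf U = domf T /\ forall k, conv (segs T k) (segs U k).
Proof.
move=> hN [r [s1 [x [y [s2 [x' [y' [r_in [Er [st ->]]]]]]]]]].
split=> [|k]; first exact: domf_set.
rewrite segs_set; case: eqP => [-> | _]; last exact: rst_refl.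
rewrite Er; apply: rstep_conv st.
by move: (condN_sorted r hN); rewrite Er sorted_cat_cons => /andP[_ /andP[]].
Qed.

Lemma equiv_conv T U : equiv_ms T U -> (forall V, equiv_ms T V -> condN V) ->
  domf U = domf T /\ forall k, conv (segs T k) (segs U k).
Proof.
elim=> {T U} [T U st | T | T U eTU IH | T U W eTU IHTU eUW IHUW] hN.
- exact: Rstep_conv (hN _ (rst_refl _ _ _)) st.
- by split=> // k; apply: rst_refl.
- have [dU cU] : domf U = domf T /\ forall k, conv (segs T k) (segs U k).
    by apply: IH => V eTV; apply/hN/(rst_trans _ _ _ _ _ (rst_sym _ _ _ _ eTU) eTV).
  by split=> // k; apply: rst_sym.
- have [dU cU] := IHTU hN.
  have [dW cW] : domf W = domf U /\ forall k, conv (segs U k) (segs W k).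
    by apply: IHUW => V eUV; apply/hN/(rst_trans _ _ _ _ _ eTU eUV).
  by split=> [|k]; [rewrite dW | apply: rst_trans (cU k) (cW k)].
Qed.

Lemma equiv_normal_unique S U V : (forall W, equiv_ms S W -> condN W) ->
  equiv_ms S U -> equiv_ms S V ->
  (forall k, normal swap_step (segs U k)) -> (forall k, normal swap_step (segs V k)) -> U = V.
Proof.
move=> hN eSU eSV nU nV.
have [dU cU] := equiv_conv eSU hN; have [dV cV] := equiv_conv eSV hN.
apply: mseg_ext => [|k]; first by rewrite dU dV.
have cUV := rst_trans _ _ _ _ _ (rst_sym _ _ _ _ (cU k)) (cV k).
exact: rst_normal_eq swap_step_confluent cUV (nU k) (nV k).
Qed.

Lemma swap_step_Rstep T r l : r \in domf T -> swap_step (segs T r) l ->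
  Rstep T T.[r <- l]%fmap.
Proof.
move=> r_in /swap_stepP[s1 [x [y [s2 [Er -> /and3P[xyA yxB _]]]]]].
exists r, s1, x, y, s2, (mirror x y), x; do 3!split=> //.
by left; do 2!split=> //; case: x {Er xyA yxB}.
Qed.

Definition same_AP T U := domf U = domf T /\
  forall k, perm_eq (map forget_mu (segs T k)) (map forget_mu (segs U k)).

Lemma same_AP_all T U (P : Cusp -> seg -> Prop) : same_AP T U ->
  (forall k, k \in domf T -> forall s, s \in segs T k -> P k (forget_mu s)) ->
  forall k, k \in domf U -> forall s, s \in segs U k -> P k (forget_mu s).
Proof.
move=> [dU pTU] PT k; rewrite dU => k_in s s_in.
have : forget_mu s \in map forget_mu (segs T k) by rewrite (perm_mem (pTU k)) map_f.
by case/mapP => t t_in ->; apply: PT.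
Qed.

Lemma same_AP_big T U (R : Type) (idx : R) (op : Monoid.com_law idx)
    (F : Cusp -> seg -> R) : same_AP T U ->
  \big[op/idx]_(k <- enum_fset (domf T)) \big[op/idx]_(s <- segs T k) F k (forget_mu s) =
  \big[op/idx]_(k <- enum_fset (domf U)) \big[op/idx]_(s <- segs U k) F k (forget_mu s).
Proof.
move=> [-> pTU]; apply: eq_bigr => k _.
by rewrite -!(big_map forget_mu xpredT (F k)); apply: perm_big.
Qed.

Lemma swap_step_same_AP T r l : r \in domf T -> swap_step (segs T r) l ->
  same_AP T T.[r <- l]%fmap.
Proof.
move=> r_in st; split=> [|k]; first exact: domf_set.
by rewrite segs_set; case: eqP => [-> | _]; [apply: swap_step_perm | apply: perm_refl].
Qed.

Lemma parity_sum_swap T r l : r \in domf T -> swap_step (segs T r) l ->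
  {in segs T r, forall s, (2 %| smu s - (bnat s)%:Z)%Z} ->
  (2 %| parity_sum T)%Z -> (2 %| parity_sum T.[r <- l]%fmap)%Z.
Proof.
move=> r_in st par.
have parityE U : parity_sum U = \sum_(k <- enum_fset (domf U)) parity_from 0 (segs U k).
  by apply: eq_bigr => k _; rewrite parity_fromE; apply: eq_bigr => i _; rewrite add0r.
rewrite !parityE domf_set // !(bigD1_seq r) ?fset_uniq //= segs_set eqxx.
under [in X in _ -> X]eq_bigr => k /negbTE nkr do rewrite segs_set nkr.
by move: (swap_step_parity 0 st par); lia.
Qed.

Definition nest_count_ms T : nat := (\sum_(k <- enum_fset (domf T)) nest_count (segs T k))%N.

Lemma nest_count_ms_swap T r l : r \in domf T -> swap_step (segs T r) l ->
  (nest_count_ms T.[r <- l]%fmap < nest_count_ms T)%N.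
Proof.
move=> r_in st; rewrite /nest_count_ms domf_set // !(bigD1_seq r) ?fset_uniq //=.
under eq_bigr => k /negbTE nkr do rewrite segs_set nkr.
by rewrite segs_set eqxx (swap_step_nest_count st) addSn ltnSn.
Qed.

Section ArthurParameter.
Variables (deg : Cusp -> nat) (symp : Cusp -> bool) (Chi : zmodType) (detc : Cusp -> Chi).

Lemma same_AP_good_parity T U g n : same_AP T U ->
  good_parity_AP deg symp detc T g n -> good_parity_AP deg symp detc U g n.
Proof.
move=> eTU [intT gT]; split.
  pose P (_ : Cusp) (s : seg) := (sA s + sB s \is a Num.int) /\ 0 <= sA s + sB s.
  exact: (same_AP_all (P := P)) eTU intT.
have dimE : (\sum_(k <- enum_fset (domf T)) \sum_(s <- segs T k) deg k * anat s * bnat s =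
             \sum_(k <- enum_fset (domf U)) \sum_(s <- segs U k) deg k * anat s * bnat s)%N.
  exact: (same_AP_big _ (fun k s => deg k * anat s * bnat s)%N eTU).
case: g gT => [[sympT dimT] | [sympT [dimT detT]]].
  split; first exact: (same_AP_all (P := summand_symp symp)) eTU sympT.
  by rewrite -dimE.
split; first exact: (same_AP_all (P := fun k s => ~~ summand_symp symp k s)) eTU sympT.
split; first by rewrite -dimE.
have detE : \sum_(k <- enum_fset (domf T)) \sum_(s <- segs T k) detc k *+ (anat s * bnat s) =
            \sum_(k <- enum_fset (domf U)) \sum_(s <- segs U k) detc k *+ (anat s * bnat s).
  exact: (same_AP_big _ (fun k s => detc k *+ (anat s * bnat s)) eTU).
by rewrite -detE.
Qed.

Lemma ext_ms_swap T r l : r \in domf T -> swap_step (segs T r) l -> condN T ->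
  ext_ms deg symp detc T -> ext_ms deg symp detc T.[r <- l]%fmap.
Proof.
move=> r_in st hN [[_ [ordT [posT [[g [n apT]] parT]]]] extT].
have eTU := swap_step_same_AP r_in st.
have extU k : k \in domf T.[r <- l]%fmap ->
    forall s, s \in segs T.[r <- l]%fmap k -> ext_seg s.
  rewrite domf_set // segs_set => k_in; case: eqP => _; last exact: extT.
  exact: swap_step_ext_seg st (condN_sorted r hN) (extT r r_in).
split=> //; split; first by move=> k k_in s s_in; case: (extU k k_in s s_in).
split.
  move=> k; apply/pairwise_may_precedeP; rewrite segs_set; case: eqP => _.
    exact/(swap_step_pairwise st)/pairwise_may_precedeP/ordT.
  exact/pairwise_may_precedeP/ordT.
split; first exact: (same_AP_all (P := fun _ s => 0 <= sA s + sB s)) eTU posT.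
split; first by exists g, n; apply: same_AP_good_parity apT.
apply: parity_sum_swap st _ parT => //= s s_in.
by case: (extT r r_in s s_in) => [[_ ?] _].
Qed.

Lemma equiv_nonnested_exists S T : (forall V, equiv_ms S V -> condN V) ->
  equiv_ms S T -> ext_ms deg symp detc T ->
  exists U, [/\ equiv_ms S U, ext_ms deg symp detc U & forall k, nonnested (segs U k)].
Proof.
move=> hN; have [n] := ubnP (nest_count_ms T); elim: n T => // n IH T lt_Tn eST extT.
have [/allP nT | /allPn[r r_in /swap_step_exists[l st]]] :=
  boolP (all (fun k => nonnested (segs T k)) (enum_fset (domf T))).
  by exists T; split=> // k; have [/nT // | /segs_notin -> //] := boolP (k \in domf T).
have eSU := rst_trans _ _ _ _ _ eST (rst_step _ _ _ _ (swap_step_Rstep r_in st)).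
apply: IH eSU (ext_ms_swap r_in st (hN _ eST) extT).
by apply: leq_trans (nest_count_ms_swap r_in st) _; rewrite -ltnS.
Qed.

End ArthurParameter.

Definition std_le (x y : seg) : bool :=
  (sB x < sB y) || ((sB x == sB y) && (sA y <= sA x)).

Lemma std_le_trans : transitive std_le.
Proof.
move=> y x z; rewrite /std_le => /orP[xy | /andP[/eqP-> yx]] /orP[yz | /andP[/eqP<- zy]].
- by rewrite (lt_trans xy yz).
- by rewrite xy.
- by rewrite yz.
- by rewrite eqxx (le_trans zy yx) orbT.
Qed.

Lemma std_le_not_nested x y : std_le x y -> ~~ nested x y.
Proof.
rewrite /std_le /nested => /orP[ltB | /andP[/eqP eqB leA]].
  by apply/negP => /and3P[_ leB _]; lra.
apply/negP => /and3P[leA' _ neq].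
by move: neq; rewrite eqB eqxx orbF eq_le leA leA'.
Qed.

Lemma not_nested_std_le x y : ~~ nested x y -> may_precede x y -> std_le x y.
Proof.
rewrite /nested /may_precede /std_le => nn mp.
case: (ltgtP (sB x) (sB y)) => //= [ltB | eqB].
  move: mp; rewrite ltB andbT -leNgt => leA.
  by move: nn; rewrite leA (ltW ltB) (gt_eqF ltB) orbT.
rewrite leNgt; apply: contra nn => ltA.
by rewrite eqB lexx (ltW ltA) (lt_eqF ltA).
Qed.

Lemma standardP T : standard T <-> forall k, sorted std_le (segs T k).
Proof.
split=> [std k | srt k i j il jl lt_key].
  apply/(sortedP seg0) => i lt_i1; rewrite /std_le.
  set x := nth seg0 _ i; set y := nth seg0 _ i.+1.
  have key : ~ (sB y < sB x \/ sB y = sB x /\ sA x < sA y).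
    by move/(std k i.+1 i lt_i1 (ltnW lt_i1)); rewrite ltnNge leqnSn.
  case: (ltgtP (sB x) (sB y)) => //= [ltB | eqB]; first by case: key; left.
  by rewrite leNgt; apply/negP => ltA; case: key; right.
case: (ltngtP i j) => // [lt_ji | eq_ij]; last by move: lt_key; rewrite eq_ij !ltxx => -[|[]].
have := sorted_ltn_nth std_le_trans seg0 (srt k) j i jl il lt_ji; rewrite /std_le.
by case: lt_key => [ltB | [eqB ltA]] /orP[ltB' | /andP[/eqP eqB' leA]]; lra.
Qed.

Lemma standard_nonnested T k : standard T -> nonnested (segs T k).
Proof. by move/standardP/(_ k); apply: sub_sorted => x y /std_le_not_nested. Qed.

Lemma nonnested_standard T : (forall k, pairwise may_precede (segs T k)) ->
  (forall k, nonnested (segs T k)) -> standard T.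
Proof.
move=> pw nn; apply/standardP => k.
have : sorted [rel x y | ~~ nested x y && may_precede x y] (segs T k).
  by rewrite sorted_relI; apply/andP; split; [exact: nn | exact: pairwise_sorted].
by apply: sub_sorted => x y /andP[]; apply: not_nested_std_le.
Qed.

End MultiSegments.

Theorem proposition3p5 (Cusp : choiceType) (deg : Cusp -> nat) (symp : Cusp -> bool)
    (Chi : zmodType) (detc : Cusp -> Chi)
    (deg_pos : forall r, (0 < deg r)%N)
    (detc_quadratic : forall r, (detc r *+ 2 = 0)%R)
    (detc_symp : forall r, symp r -> detc r = 0%R)
    (S : mseg Cusp) :
  in_Rep deg symp detc S ->
  exists! S' : mseg Cusp,
    equiv_ms S S' /\ ext_ms deg symp detc S' /\ standard S'.
Proof.
move=> [extS [_ [hN _]]].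
have [U [eSU extU nU]] := equiv_nonnested_exists hN (rst_refl _ _ S) extS.
have pwU k : pairwise may_precede (segs U k).
  by case: extU => [[_ [ordU _]] _]; apply/pairwise_may_precedeP/ordU.
exists U; split.
  by split=> //; split=> //; apply: nonnested_standard.
move=> V [eSV [_ stdV]]; apply: equiv_normal_unique hN eSU eSV _ _ => k.
  exact/nonnested_normal/nU.
exact/nonnested_normal/standard_nonnested.
Qed.
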